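(* For all non-negative integers $n$ and $p$, $$\sum_{k=1}^n\binom{2k}{k}^{-1}\binom{2(k+p)}{k+p}\binom{k+p}{k}\left(O_{k+p}-O_k\right)=\frac14\binom{2n}{n}^{-1}\binom{2(n+p+1)}{n+p+1}\binom{n+p+1}{n}\left(O_{n+p+1}-O_n\right)-\frac14\binom{2(p+1)}{p+1}O_{p+1}.$$
   Context: The odd harmonic numbers are $O_n=\sum_{k=1}^n\frac{1}{2k-1}$, $O_0=0$. *)

From mathcomp Require Import all_boot all_order all_algebra.
Set Implicit Arguments. Unset Strict Implicit. Unset Printing Implicit Defensive.
Import Order.TTheory GRing.Theory Num.Theory.
Local Open Scope ring_scope.

Definition oddH (n : nat) : rat :=
  \sum_(1 <= k < n.+1) ((2 * k - 1)%N%:R)^-1.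

From mathcomp Require Import all_boot all_order all_algebra.
From mathcomp Require Import zify ring lra.
Import Order.TTheory GRing.Theory Num.Theory.
Local Open Scope ring_scope.

(* The right-hand side is F(n) - F(0) for an explicit antidifference F: writing
   every binomial at index k+1 as a rational multiple of one at index k, and
   O_{m+1} = O_m + 1/(2m+1), the identity F(k+1) - F(k) = (k+1)-th summand
   becomes an identity of rational functions in k and p, and the sum telescopes. *)

Lemma natr_div_of_mul (R : numFieldType) (a b c m : nat) :
  (m.+1 * a = b * c)%N -> a%:R = b%:R * c%:R / (m%:R + 1) :> R.
Proof.
move=> eq_abc; rewrite natr1; apply: (@mulIf _ m.+1%:R); first by rewrite pnatr_eq0.
by rewrite mulfVK ?pnatr_eq0 // -!natrM mulnC eq_abc.
Qed.

Lemma natr_bin_diag (R : numFieldType) (q k : nat) :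
  'C(q.+1, k.+1)%:R = 'C(q, k)%:R * (q%:R + 1) / (k%:R + 1) :> R.
Proof. by rewrite natr1; apply: natr_div_of_mul; rewrite -mul_bin_diag mulnC. Qed.

Lemma natr_bin_left (R : numFieldType) (q k : nat) :
  'C(q, k.+1)%:R = 'C(q, k)%:R * (q - k)%:R / (k%:R + 1) :> R.
Proof. by apply: natr_div_of_mul; rewrite mul_bin_left mulnC. Qed.

Lemma natr_bin_centralS (R : numFieldType) (k : nat) :
  'C(2 * k.+1, k.+1)%:R = 'C(2 * k, k)%:R * (2 * (2 * k%:R + 1)) / (k%:R + 1) :> R.
Proof.
rewrite (_ : 2 * (2 * k%:R + 1) = (2 * (2 * k).+1)%:R); last first.
  by rewrite natrM -[((2 * k).+1)%:R]natr1 natrM.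
apply: natr_div_of_mul.
have bin_sym : 'C((2 * k).+1, k.+1) = 'C((2 * k).+1, k).
  by rewrite -bin_sub; [congr binomial; lia | lia].
have := mul_bin_diag (2 * k).+2 k; have := mul_bin_diag (2 * k).+1 k.
rewrite /= bin_sym (_ : 2 * k.+1 = (2 * k).+2)%N; [nia | lia].
Qed.

Lemma natr_bin_neq0 (R : numFieldType) (q k : nat) :
  (k <= q)%N -> 'C(q, k)%:R != 0 :> R.
Proof. by move=> le_kq; rewrite pnatr_eq0 -lt0n bin_gt0. Qed.

Lemma oddHS (k : nat) : oddH k.+1 = oddH k + (2 * k%:R + 1)^-1.
Proof.
rewrite /oddH big_nat_recr //= -natrM natr1; congr (_ + _%:R^-1); lia.
Qed.

Definition summand (p k : nat) : rat :=
  'C(2 * k, k)%:R^-1 * 'C(2 * (k + p), k + p)%:R * 'C(k + p, k)%:R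
    * (oddH (k + p) - oddH k).

Definition antidiff (p n : nat) : rat :=
  1 / 4 * 'C(2 * n, n)%:R^-1 * 'C(2 * (n + p + 1), n + p + 1)%:R
    * 'C(n + p + 1, n)%:R * (oddH (n + p + 1) - oddH n).

Lemma antidiffS (p k : nat) : antidiff p k.+1 - antidiff p k = summand p k.+1.
Proof.
rewrite /antidiff /summand; set m := (k + p)%N.
rewrite (_ : (k.+1 + p + 1 = m.+2)%N); last by rewrite /m; lia.
rewrite (_ : (k.+1 + p = m.+1)%N); last by rewrite /m; lia.
rewrite (_ : (k + p + 1 = m.+1)%N); last by rewrite /m; lia.
rewrite (natr_bin_centralS _ k) (natr_bin_centralS _ m.+1).
rewrite (natr_bin_diag _ m.+1 k) (natr_bin_left _ m.+1 k) !oddHS.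
rewrite (_ : (m.+1 - k = p.+1)%N); last by rewrite /m; lia.
rewrite (_ : m.+1 = k + p.+1)%N; last by rewrite /m; lia.
rewrite natrD -natr1.
have nz_k : 'C(2 * k, k)%:R != 0 :> rat by apply: natr_bin_neq0; lia.
have k_ge0 : 0 <= k%:R :> rat := ler0n _ k.
have m_ge0 : 0 <= m%:R :> rat := ler0n _ m.
have p_ge0 : 0 <= p%:R :> rat := ler0n _ p.
field; rewrite nz_k /=.
by apply/and5P; split; rewrite lt0r_neq0 //; lra.
Qed.

Lemma antidiff0 (p : nat) :
  antidiff p 0 = 1 / 4 * 'C(2 * (p + 1), p + 1)%:R * oddH (p + 1).
Proof. by rewrite /antidiff [oddH 0]/oddH big_geq // !bin0 invr1 add0n !mulr1 subr0. Qed.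

Theorem theorem16 (n p : nat) :
  \sum_(1 <= k < n.+1)
     (('C(2 * k, k))%:R^-1 * ('C(2 * (k + p), k + p))%:R * ('C(k + p, k))%:R
        * (oddH (k + p) - oddH k) : rat)
  = 1 / 4 * ('C(2 * n, n))%:R^-1 * ('C(2 * (n + p + 1), n + p + 1))%:R
        * ('C(n + p + 1, n))%:R * (oddH (n + p + 1) - oddH n)
    - 1 / 4 * ('C(2 * (p + 1), p + 1))%:R * oddH (p + 1).
Proof.
rewrite -antidiff0 (telescope_sumr_eq (fun k => antidiff p k.-1) (summand p)) //.
by case=> // k _; rewrite antidiffS.
Qed.
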